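(* Let $I_1,I_2>0$ with $I_1\neq I_2$, $\alpha_i=1+I_i$, $\beta_i=1-I_i$, and $M>0$. Consider the system on $\mathbb{R}^2$ $$\dot\theta_1=\alpha_1+\beta_1\cos\theta_1+(1-\cos\theta_1)u,\qquad \dot\theta_2=\alpha_2+\beta_2\cos\theta_2+(1-\cos\theta_2)u,$$ with measurable controls satisfying $|u(t)|\le M$, and the time-optimal control problem of steering $(\theta_1,\theta_2)(0)=(0,0)$ to $(\theta_1,\theta_2)(T)=(2m_1\pi,2m_2\pi)$, $m_1,m_2$ positive integers, in minimum time $T$. Then for any extremal of this problem given by Pontryagin's maximum principle (Hamiltonian $H=\lambda_0+\langle\lambda, f+Zu\rangle$ with $f=(\alpha_1+\beta_1\cos\theta_1,\alpha_2+\beta_2\cos\theta_2)'$, $Z=(1-\cos\theta_1,1-\cos\theta_2)'$), the switching function $\phi(t)=\langle\lambda(t),Z(\Theta(t))\rangle$ does not vanish identically on any time interval of positive length. Consequently a minimum-time control is bang-bang: $u(t)=M$ when $\phi(t)<0$ and $u(t)=-M$ when $\phi(t)>0$, so that $u(t)\in\{-M,M\}$ for almost every $t$.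
   Context: Here $\lambda(t)\in\mathbb{R}^2$ is the costate of the maximum principle (nonzero, satisfying the adjoint equation $\dot\lambda=-\partial H/\partial\Theta$), and the optimal control minimizes the Hamiltonian pointwise over $|u|\le M$. *)

From Stdlib Require Import Reals Lra List.
Import ListNotations.
Open Scope R_scope.

(** Lebesgue-null subsets of R: coverable by countably many open intervals
    of arbitrarily small total length. *)
Definition negligible (N : R -> Prop) : Prop :=
  forall eps : R, 0 < eps ->
    exists a b : nat -> R,
      (forall n, a n <= b n) /\
      (forall x, N x -> exists n, a n < x < b n) /\
      (forall n, sum_f_R0 (fun k => b k - a k) n <= eps).

Definition ae_on (T : R) (P : R -> Prop) : Prop :=
  exists N : R -> Prop, negligible N /\
    forall t, 0 <= t <= T -> ~ N t -> P t.

Fixpoint nonoverlap (l : list (R * R)) : Prop :=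
  match l with
  | [] => True
  | p :: l' => Forall (fun q => snd p <= fst q) l' /\ nonoverlap l'
  end.

Definition total_length (l : list (R * R)) : R :=
  fold_right (fun p s => (snd p - fst p) + s) 0 l.

Definition total_variation_on (f : R -> R) (l : list (R * R)) : R :=
  fold_right (fun p s => Rabs (f (snd p) - f (fst p)) + s) 0 l.

Definition abs_cont_on (T : R) (f : R -> R) : Prop :=
  forall eps : R, 0 < eps -> exists delta : R, 0 < delta /\
    forall l : list (R * R),
      Forall (fun p => 0 <= fst p /\ fst p <= snd p /\ snd p <= T) l ->
      nonoverlap l ->
      total_length l < delta ->
      total_variation_on f l < eps.

Definition alpha (I : R) : R := 1 + I.
Definition beta (I : R) : R := 1 - I.

Definition f_i (I th : R) : R := alpha I + beta I * cos th.
Definition Z_i (th : R) : R := 1 - cos th.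

Definition Ham (I1 I2 lam0 l1 l2 th1 th2 v : R) : R :=
  lam0 + l1 * (f_i I1 th1 + Z_i th1 * v) + l2 * (f_i I2 th2 + Z_i th2 * v).

(** Partial derivative of H with respect to theta_i (written out):
    d/dth [ l * (alpha + beta cos th + (1 - cos th) v) ]
      = l * (- beta sin th + v sin th). *)
Definition dHam_dth (I l th v : R) : R := l * (- beta I * sin th + v * sin th).

Definition switching (l1 l2 th1 th2 : R) : R := l1 * Z_i th1 + l2 * Z_i th2.

(* Along an extremal, write phi = <lam, Z> for the switching function,
   psi = sum_i l_i sin th_i, chi = sum_i l_i (beta_i + alpha_i cos th_i) and
   p_i = l_i sin th_i.  At every time where the state and costate equations
   hold pointwise, the chain rule gives (using alpha_i + beta_i = 2)
       phi' = 2 psi,   psi' = chi - u phi,   chi' = -4 (I1 p1 + I2 p2) - 2 u psi,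
       p_i' = l_i (beta_i + alpha_i cos th_i) - u l_i Z_i.
   Hence a zero of phi at such a time is an isolated zero of one of
   phi, psi, chi, p1, p2 (a zero with nonzero derivative is isolated), unless
   all these quantities vanish together, which is impossible for lam <> 0 and
   I1 <> I2.  Isolated zeros of a real function form a countable set, hence
   a null set, and a nondegenerate interval is not null: so phi cannot vanish
   on an interval.  Since H is affine in u with slope phi, the minimum
   condition then forces u = -M sign(phi) almost everywhere. *)

From Stdlib Require Import Reals Lra Lia ZArith List Classical ClassicalEpsilon Cantor.
Open Scope R_scope.

(** * Null sets *)

Definition countable (C : R -> Prop) : Prop :=
  exists g : nat -> R, forall x, C x -> exists n, x = g n.

Lemma sum_geometric_halves (eps : R) (n : nat) :
  sum_f_R0 (fun k => eps / 2 ^ S k) n = eps - eps / 2 ^ S n.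
Proof.
  induction n as [|n IH].
  - simpl. field.
  - rewrite tech5, IH. change (2 ^ S (S n)) with (2 * 2 ^ S n).
    assert (0 < 2 ^ S n) by (apply pow_lt; lra). field. lra.
Qed.

(** A countable set is null: cover its n-th point by an interval of length
    eps / 2^(n+1). *)
Lemma countable_negligible (C : R -> Prop) : countable C -> negligible C.
Proof.
  intros [g Hg] eps Heps.
  set (r n := eps / 2 ^ S (S n)).
  assert (Hr : forall n, 0 < r n).
  { intros n. apply Rdiv_lt_0_compat; [lra | apply pow_lt; lra]. }
  exists (fun n => g n - r n), (fun n => g n + r n). repeat split.
  - intros n. specialize (Hr n). lra.
  - intros x Cx. destruct (Hg x Cx) as [n ->]. exists n. specialize (Hr n). lra.
  - intros n. rewrite (sum_eq _ (fun k => eps / 2 ^ S k)).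
    + rewrite sum_geometric_halves.
      assert (0 < eps / 2 ^ S n) by (apply Rdiv_lt_0_compat; [lra | apply pow_lt; lra]).
      lra.
    + intros k _. unfold r. change (2 ^ S (S k)) with (2 * 2 ^ S k).
      assert (0 < 2 ^ S k) by (apply pow_lt; lra). field. lra.
Qed.

Definition interleave (A B : nat -> R) (n : nat) : R :=
  if Nat.even n then A (Nat.div2 n) else B (Nat.div2 n).

Lemma interleave_even (A B : nat -> R) (m : nat) : interleave A B (2 * m) = A m.
Proof. unfold interleave. now rewrite Nat.even_mul, Nat.div2_double. Qed.

Lemma interleave_odd (A B : nat -> R) (m : nat) : interleave A B (S (2 * m)) = B m.
Proof.
  unfold interleave. now rewrite Nat.even_succ, Nat.odd_mul, Nat.div2_succ_double.
Qed.

Lemma countable_union (C1 C2 : R -> Prop) :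
  countable C1 -> countable C2 -> countable (fun x => C1 x \/ C2 x).
Proof.
  intros [g1 H1] [g2 H2]. exists (interleave g1 g2). intros x [Cx | Cx].
  - destruct (H1 x Cx) as [n ->]. exists (2 * n)%nat. now rewrite interleave_even.
  - destruct (H2 x Cx) as [n ->]. exists (S (2 * n)). now rewrite interleave_odd.
Qed.

Lemma partial_sums_mono (c : nat -> R) (n m : nat) :
  (forall k, 0 <= c k) -> (n <= m)%nat -> sum_f_R0 c n <= sum_f_R0 c m.
Proof.
  intros Hc Hnm. induction Hnm as [|m _ IH]; [lra|]. rewrite tech5.
  specialize (Hc (S m)). lra.
Qed.

Lemma sum_interleave (c1 c2 : nat -> R) (n : nat) :
  sum_f_R0 (interleave c1 c2) (2 * S n) = sum_f_R0 c1 (S n) + sum_f_R0 c2 n.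
Proof.
  rewrite <- sum_decomposition. f_equal; apply sum_eq; intros k _.
  - apply interleave_even.
  - apply interleave_odd.
Qed.

Lemma negligible_union (N1 N2 : R -> Prop) :
  negligible N1 -> negligible N2 -> negligible (fun x => N1 x \/ N2 x).
Proof.
  intros H1 H2 eps Heps.
  destruct (H1 (eps / 2)) as (a1 & b1 & Hab1 & Hc1 & Hs1); [lra|].
  destruct (H2 (eps / 2)) as (a2 & b2 & Hab2 & Hc2 & Hs2); [lra|].
  set (c1 k := b1 k - a1 k). set (c2 k := b2 k - a2 k).
  assert (Hlen : forall k, interleave b1 b2 k - interleave a1 a2 k = interleave c1 c2 k).
  { intros k. unfold interleave, c1, c2. now destruct (Nat.even k). }
  exists (interleave a1 a2), (interleave b1 b2). repeat split.
  - intros n. unfold interleave. destruct (Nat.even n); [apply Hab1 | apply Hab2].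
  - intros x [Nx | Nx].
    + destruct (Hc1 x Nx) as [n Hn]. exists (2 * n)%nat. now rewrite !interleave_even.
    + destruct (Hc2 x Nx) as [n Hn]. exists (S (2 * n)). now rewrite !interleave_odd.
  - intros n. rewrite (sum_eq _ _ _ (fun k _ => Hlen k)).
    assert (Hnonneg : forall k, 0 <= interleave c1 c2 k).
    { intros k. unfold interleave, c1, c2.
      destruct (Nat.even k); [specialize (Hab1 (Nat.div2 k)) | specialize (Hab2 (Nat.div2 k))];
      lra. }
    apply Rle_trans with (sum_f_R0 (interleave c1 c2) (2 * S n)).
    + apply partial_sums_mono; [exact Hnonneg | lia].
    + rewrite sum_interleave. specialize (Hs1 (S n)). specialize (Hs2 n). fold c1 c2 in Hs1, Hs2.
      lra.
Qed.

(** * A nondegenerate interval is not null *)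

Lemma total_length_app (L1 L2 : list (R * R)) :
  total_length (L1 ++ L2) = total_length L1 + total_length L2.
Proof. induction L1 as [|p L1 IH]; simpl; lra. Qed.

Lemma total_length_nonneg (L : list (R * R)) :
  Forall (fun p => fst p <= snd p) L -> 0 <= total_length L.
Proof. induction 1; simpl; lra. Qed.

(** Finitely many open intervals covering [x, y] have total length at least
    y - x: remove the interval containing x and recurse from its right end. *)
Lemma cover_length (n : nat) (L : list (R * R)) :
  (length L <= n)%nat -> Forall (fun p => fst p <= snd p) L ->
  forall x y, x <= y ->
  (forall z, x <= z <= y -> exists p, In p L /\ fst p < z < snd p) ->
  y - x <= total_length L.
Proof.
  revert L. induction n as [|n IH]; intros L Hlen HL x y Hxy Hcov.
  - destruct L; [|simpl in Hlen; lia]. destruct (Hcov x) as [p [[] _]]. lra.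
  - destruct (Hcov x) as [p [Hp Hpx]]; [lra|].
    destruct (In_split p L Hp) as [L1 [L2 ->]].
    apply Forall_app in HL as [HL1 HL2]. inversion HL2 as [|? ? _ HL2']; subst.
    assert (Hrest : Forall (fun p => fst p <= snd p) (L1 ++ L2)) by (apply Forall_app; auto).
    assert (Hsplit : total_length (L1 ++ p :: L2) = (snd p - fst p) + total_length (L1 ++ L2)).
    { rewrite !total_length_app. simpl. lra. }
    rewrite Hsplit. pose proof (total_length_nonneg _ Hrest).
    destruct (Rlt_or_le y (snd p)) as [Hy | Hy]; [lra|].
    enough (y - snd p <= total_length (L1 ++ L2)) by lra.
    apply IH; auto.
    + rewrite length_app in *. simpl in Hlen. lia.
    + intros z Hz. destruct (Hcov z) as [q [Hq Hqz]]; [lra|]. exists q. split; auto.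
      apply in_app_or in Hq. apply in_or_app. destruct Hq as [Hq | [<- | Hq]]; auto. lra.
Qed.

Lemma total_length_seq (a b : nat -> R) (n : nat) :
  total_length (map (fun k => (a k, b k)) (seq 0 (S n))) = sum_f_R0 (fun k => b k - a k) n.
Proof.
  induction n as [|n IH]; [simpl; lra|].
  rewrite seq_S, map_app, total_length_app, IH. simpl. lra.
Qed.

(** Heine-Borel for a sequence of open intervals covering [c, d]: the supremum
    of the points up to which finitely many intervals suffice is d. *)
Lemma finite_subcover (a b : nat -> R) (c d : R) : c <= d ->
  (forall z, c <= z <= d -> exists k, a k < z < b k) ->
  exists n, forall z, c <= z <= d -> exists k, (k < n)%nat /\ a k < z < b k.
Proof.
  intros Hcd Hcov.
  set (E x := c <= x <= d /\
              exists n, forall z, c <= z <= x -> exists k, (k < n)%nat /\ a k < z < b k).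
  assert (Ec : E c).
  { split; [lra|]. destruct (Hcov c) as [k Hk]; [lra|]. exists (S k).
    intros z Hz. exists k. split; [lia|]. replace z with c by lra. exact Hk. }
  assert (Hbound : bound E) by (exists d; intros x [Hx _]; lra).
  destruct (completeness E Hbound (ex_intro _ c Ec)) as [m [Hub Hlub]].
  assert (Hcm : c <= m) by (apply Hub; exact Ec).
  assert (Hmd : m <= d) by (apply Hlub; intros x [Hx _]; lra).
  destruct (Hcov m) as [j Hj]; [lra|].
  (* some x in E lies in the interval j containing m *)
  assert (Hx : exists x, E x /\ a j < x).
  { apply NNPP. intros Hn. enough (m <= a j) by lra. apply Hlub. intros x Ex.
    destruct (Rle_or_lt x (a j)) as [Hle | Hlt]; [exact Hle|].
    exfalso. apply Hn. now exists x. }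
  destruct Hx as [x [[Hx [n Hn]] Hxa]].
  (* then E extends past m within interval j, unless it already reaches d *)
  set (x' := Rmin d ((m + b j) / 2)).
  assert (Ex' : E x').
  { assert (x' <= (m + b j) / 2) by apply Rmin_r.
    split; [split; [apply Rmin_glb; lra | apply Rmin_l]|].
    exists (max n (S j)). intros z Hz. destruct (Rle_or_lt z x) as [Hzx | Hzx].
    - destruct (Hn z) as [k [Hk Hkz]]; [lra|]. exists k. split; [lia | exact Hkz].
    - exists j. split; [lia | lra]. }
  assert (Hx'm : x' <= m) by (apply Hub; exact Ex').
  unfold x' in *. destruct (Rle_or_lt d ((m + b j) / 2)) as [Hd | Hd].
  - rewrite Rmin_left in Ex' by lra. destruct Ex' as [_ [n' Hn']]. now exists n'.
  - rewrite Rmin_right in Hx'm by lra. lra.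
Qed.

Lemma interval_not_negligible (N : R -> Prop) (a b : R) :
  a < b -> negligible N -> ~ (forall t, a < t < b -> N t).
Proof.
  intros Hab HN Hsub.
  destruct (HN ((b - a) / 4)) as (an & bn & Hle & Hcov & Hsum); [lra|].
  set (c := a + (b - a) / 4). set (d := b - (b - a) / 4).
  destruct (finite_subcover an bn c d) as [n Hn].
  - unfold c, d. lra.
  - intros z Hz. apply Hcov, Hsub. unfold c, d in Hz. lra.
  - destruct n as [|n].
    { destruct (Hn c) as [k [Hk _]]; [unfold c, d; lra | lia]. }
    set (L := map (fun k => (an k, bn k)) (seq 0 (S n))).
    assert (Hlen : d - c <= total_length L).
    { apply (cover_length (length L)); auto.
      - apply Forall_forall. intros p Hp. apply in_map_iff in Hp.
        destruct Hp as [k [<- _]]. apply Hle.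
      - unfold c, d. lra.
      - intros z Hz. destruct (Hn z Hz) as [k [Hk Hkz]].
        exists (an k, bn k). split; [|exact Hkz].
        apply (in_map (fun k => (an k, bn k))). apply in_seq. lia. }
    unfold L in Hlen. rewrite total_length_seq in Hlen. specialize (Hsum n).
    unfold c, d in Hlen. lra.
Qed.

(** * Isolated zeros *)

Definition isolated_zero (g : R -> R) (x : R) : Prop :=
  g x = 0 /\ exists d, 0 < d /\ forall y, g y = 0 -> Rabs (y - x) <= d -> y = x.

Definition int_of_nat (k : nat) : Z :=
  let (p, q) := Cantor.of_nat k in (Z.of_nat p - Z.of_nat q)%Z.

Lemma int_of_nat_surj (z : Z) : exists k, int_of_nat k = z.
Proof.
  exists (Cantor.to_nat (Z.to_nat z, Z.to_nat (- z))).
  unfold int_of_nat. rewrite Cantor.cancel_of_to. lia.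
Qed.

(** A zero of g in the window [m/N - 1/N, m/N + 1/N], isolated at scale 2/N;
    there is at most one, since two of them are 2/N-close. *)
Definition window_zero (g : R -> R) (N : nat) (m : Z) (x : R) : Prop :=
  g x = 0 /\ Rabs (x - IZR m / INR N) <= 1 / INR N /\
  forall y, g y = 0 -> Rabs (y - x) <= 2 / INR N -> y = x.

Lemma isolated_zeros_countable (g : R -> R) : countable (isolated_zero g).
Proof.
  set (pick N m := epsilon (inhabits 0) (window_zero g N m)).
  exists (fun n => let (N, k) := Cantor.of_nat n in pick N (int_of_nat k)).
  intros x (Hgx & d & Hd & Hiso).
  destruct (archimed_cor1 (d / 2)) as [N [HN HN0]]; [lra|].
  assert (HNpos : 0 < INR N) by (apply lt_0_INR; lia).
  destruct (archimed (x * INR N)) as [Hm1 Hm2]. set (m := up (x * INR N)) in *.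
  assert (Hwin : window_zero g N m x).
  { repeat split; auto.
    - replace (x - IZR m / INR N) with ((x * INR N - IZR m) * / INR N) by (field; lra).
      assert (0 < / INR N) by (apply Rinv_0_lt_compat; exact HNpos).
      apply Rabs_le. unfold Rdiv. split; nra.
    - intros y Hy Hyx. apply Hiso; auto. unfold Rdiv in *. lra. }
  destruct (int_of_nat_surj m) as [k Hk].
  exists (Cantor.to_nat (N, k)). rewrite Cantor.cancel_of_to, Hk.
  assert (Hpick : window_zero g N m (pick N m)) by (apply epsilon_spec; now exists x).
  destruct Hpick as (Hgp & Hp & _), Hwin as (_ & Hx & Hxiso).
  symmetry. apply Hxiso; [exact Hgp|].
  replace (pick N m - x) with ((pick N m - IZR m / INR N) - (x - IZR m / INR N)) by ring.
  eapply Rle_trans; [apply Rabs_triang|]. rewrite Rabs_Ropp. lra.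
Qed.

Lemma zero_isolated_or_critical (g : R -> R) (x l : R) :
  g x = 0 -> derivable_pt_lim g x l -> isolated_zero g x \/ l = 0.
Proof.
  intros Hg Hd. destruct (Req_dec l 0) as [Hl | Hl]; [now right|left].
  assert (Habs : 0 < Rabs l) by (apply Rabs_pos_lt; exact Hl).
  destruct (Hd (Rabs l / 2)) as [delta Hdelta]; [lra|].
  split; [exact Hg|]. exists (delta / 2). split; [destruct delta; simpl; lra|].
  intros y Hy Hyx. apply NNPP. intros Hne.
  specialize (Hdelta (y - x)). replace (x + (y - x)) with y in Hdelta by ring.
  rewrite Hy, Hg in Hdelta.
  assert (Hne' : y - x <> 0) by lra.
  assert (Hsmall : Rabs (y - x) < delta) by (destruct delta; simpl in *; lra).
  specialize (Hdelta Hne' Hsmall).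
  replace ((0 - 0) / (y - x) - l) with (- l) in Hdelta by (field; exact Hne').
  rewrite Rabs_Ropp in Hdelta. lra.
Qed.

(** * Derivatives along an extremal *)

Lemma derivable_pt_lim_mul_comp (g g' l th : R -> R) (t dl dth : R) :
  (forall x, derivable_pt_lim g x (g' x)) ->
  derivable_pt_lim l t dl -> derivable_pt_lim th t dth ->
  derivable_pt_lim (fun s => l s * g (th s)) t (dl * g (th t) + l t * (g' (th t) * dth)).
Proof.
  intros Hg Hl Hth.
  apply (derivable_pt_lim_mult l (comp g th)); [exact Hl|].
  apply derivable_pt_lim_comp; [exact Hth | apply Hg].
Qed.

Lemma derivable_pt_lim_value (f : R -> R) (t a b : R) :
  derivable_pt_lim f t a -> a = b -> derivable_pt_lim f t b.
Proof. now intros H <-. Qed.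

Lemma derivable_pt_lim_affine_cos (A B x : R) :
  derivable_pt_lim (fun y => A + B * cos y) x (B * - sin x).
Proof.
  replace (B * - sin x) with (0 + B * - sin x) by ring.
  apply (derivable_pt_lim_plus (fct_cte A) (mult_real_fct B cos)).
  - apply derivable_pt_lim_const.
  - apply derivable_pt_lim_scal, derivable_pt_lim_cos.
Qed.

Section Component.

Variables (I : R) (l th : R -> R) (t v : R).
Hypothesis Hl : derivable_pt_lim l t (- dHam_dth I (l t) (th t) v).
Hypothesis Hth : derivable_pt_lim th t (f_i I (th t) + Z_i (th t) * v).

Let sin2 : sin (th t) * sin (th t) = 1 - cos (th t) * cos (th t).
Proof. pose proof (sin2_cos2 (th t)) as E. unfold Rsqr in E. lra. Qed.

Lemma deriv_component_Z :
  derivable_pt_lim (fun s => l s * Z_i (th s)) t (2 * (l t * sin (th t))).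
Proof.
  eapply derivable_pt_lim_value.
  - apply (derivable_pt_lim_mul_comp Z_i sin); [|exact Hl | exact Hth].
    intros x. replace (sin x) with (0 - - sin x) by ring.
    apply (derivable_pt_lim_minus (fct_cte 1) cos);
      [apply derivable_pt_lim_const | apply derivable_pt_lim_cos].
  - unfold Z_i, f_i, dHam_dth, alpha, beta. ring.
Qed.

Lemma deriv_component_sin :
  derivable_pt_lim (fun s => l s * sin (th s)) t
    (l t * (beta I + alpha I * cos (th t)) - v * (l t * Z_i (th t))).
Proof.
  eapply derivable_pt_lim_value.
  - apply (derivable_pt_lim_mul_comp sin cos); [exact derivable_pt_lim_sin | exact Hl | exact Hth].
  - unfold Z_i, f_i, dHam_dth, alpha, beta.
    replace (- (l t * (- (1 - I) * sin (th t) + v * sin (th t))) * sin (th t))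
      with (l t * ((1 - I) - v) * (sin (th t) * sin (th t))) by ring.
    rewrite sin2. ring.
Qed.

Lemma deriv_component_cos :
  derivable_pt_lim (fun s => l s * (beta I + alpha I * cos (th s))) t
    (- (4 * I + 2 * v) * (l t * sin (th t))).
Proof.
  eapply derivable_pt_lim_value.
  - apply (derivable_pt_lim_mul_comp (fun y => beta I + alpha I * cos y)
             (fun y => alpha I * - sin y)); [|exact Hl | exact Hth].
    intros x. apply derivable_pt_lim_affine_cos.
  - unfold Z_i, f_i, dHam_dth, alpha, beta. ring.
Qed.

End Component.

Lemma degenerate_component (I l th v : R) :
  l <> 0 -> l * sin th = 0 ->
  l * (beta I + alpha I * cos th) - v * (l * Z_i th) = 0 ->
  Z_i th = 2 /\ v = - I.
Proof.
  intros Hl Hp Hdp. unfold Z_i, alpha, beta in *.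
  assert (Hsin : sin th = 0) by (apply Rmult_integral in Hp as [H | H]; [contradiction | exact H]).
  pose proof (sin2_cos2 th) as E. unfold Rsqr in E. rewrite Hsin in E.
  assert (Hcos : (cos th - 1) * (cos th + 1) = 0) by lra.
  apply Rmult_integral in Hcos as [Hc | Hc].
  - exfalso. replace (cos th) with 1 in Hdp by lra. apply Hl. lra.
  - replace (cos th) with (-1) in * by lra. split; [ring|].
    apply (Rmult_eq_reg_l (-2 * l)); [lra|]. intro H. apply Hl. lra.
Qed.

Lemma no_degenerate_zero (I1 I2 l1 l2 th1 th2 v : R) :
  I1 <> I2 -> (l1, l2) <> (0, 0) ->
  l1 * Z_i th1 + l2 * Z_i th2 = 0 ->
  l1 * sin th1 = 0 -> l2 * sin th2 = 0 ->
  l1 * (beta I1 + alpha I1 * cos th1) - v * (l1 * Z_i th1) = 0 ->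
  l2 * (beta I2 + alpha I2 * cos th2) - v * (l2 * Z_i th2) = 0 -> False.
Proof.
  intros HI Hnz Hphi Hp1 Hp2 Hd1 Hd2.
  destruct (Req_dec l1 0) as [Hl1 | Hl1]; destruct (Req_dec l2 0) as [Hl2 | Hl2].
  - apply Hnz. now subst.
  - destruct (degenerate_component _ _ _ _ Hl2 Hp2 Hd2) as [HZ _].
    subst l1. rewrite HZ in Hphi. lra.
  - destruct (degenerate_component _ _ _ _ Hl1 Hp1 Hd1) as [HZ _].
    subst l2. rewrite HZ in Hphi. lra.
  - destruct (degenerate_component _ _ _ _ Hl1 Hp1 Hd1) as [_ Hv1].
    destruct (degenerate_component _ _ _ _ Hl2 Hp2 Hd2) as [_ Hv2].
    apply HI. lra.
Qed.

Section Extremal.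

Variables (I1 I2 : R) (th1 th2 l1 l2 u : R -> R).

Definition phi (s : R) : R := switching (l1 s) (l2 s) (th1 s) (th2 s).
Definition p1 (s : R) : R := l1 s * sin (th1 s).
Definition p2 (s : R) : R := l2 s * sin (th2 s).
Definition psi (s : R) : R := p1 s + p2 s.
Definition chi (s : R) : R :=
  l1 s * (beta I1 + alpha I1 * cos (th1 s)) + l2 s * (beta I2 + alpha I2 * cos (th2 s)).

Definition regular_time (t : R) : Prop :=
  derivable_pt_lim th1 t (f_i I1 (th1 t) + Z_i (th1 t) * u t) /\
  derivable_pt_lim th2 t (f_i I2 (th2 t) + Z_i (th2 t) * u t) /\
  derivable_pt_lim l1 t (- dHam_dth I1 (l1 t) (th1 t) (u t)) /\
  derivable_pt_lim l2 t (- dHam_dth I2 (l2 t) (th2 t) (u t)).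

Definition exceptional_time (t : R) : Prop :=
  isolated_zero phi t \/ isolated_zero psi t \/ isolated_zero chi t \/
  isolated_zero p1 t \/ isolated_zero p2 t.

Lemma exceptional_time_countable : countable exceptional_time.
Proof. repeat apply countable_union; apply isolated_zeros_countable. Qed.

Section AtRegularTime.

Variable t : R.
Hypothesis Ht : regular_time t.

Lemma deriv_phi : derivable_pt_lim phi t (2 * psi t).
Proof.
  destruct Ht as (Hth1 & Hth2 & Hl1 & Hl2). eapply derivable_pt_lim_value.
  - apply derivable_pt_lim_plus; eapply deriv_component_Z; eassumption.
  - unfold psi, p1, p2. ring.
Qed.

Lemma deriv_p1 :
  derivable_pt_lim p1 t
    (l1 t * (beta I1 + alpha I1 * cos (th1 t)) - u t * (l1 t * Z_i (th1 t))).
Proof. destruct Ht as (Hth1 & _ & Hl1 & _). eapply deriv_component_sin; eassumption. Qed.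

Lemma deriv_p2 :
  derivable_pt_lim p2 t
    (l2 t * (beta I2 + alpha I2 * cos (th2 t)) - u t * (l2 t * Z_i (th2 t))).
Proof. destruct Ht as (_ & Hth2 & _ & Hl2). eapply deriv_component_sin; eassumption. Qed.

Lemma deriv_psi : derivable_pt_lim psi t (chi t - u t * phi t).
Proof.
  eapply derivable_pt_lim_value.
  - apply derivable_pt_lim_plus; [exact deriv_p1 | exact deriv_p2].
  - unfold chi, phi, switching. ring.
Qed.

Lemma deriv_chi : derivable_pt_lim chi t (-4 * (I1 * p1 t + I2 * p2 t) - 2 * u t * psi t).
Proof.
  destruct Ht as (Hth1 & Hth2 & Hl1 & Hl2). eapply derivable_pt_lim_value.
  - apply derivable_pt_lim_plus; eapply deriv_component_cos; eassumption.
  - unfold psi, p1, p2. ring.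
Qed.

(** A zero of the switching function at a regular time is exceptional:
    follow the cascade phi, psi, chi, (p1, p2) until a nonzero derivative. *)
Lemma switching_zero_exceptional :
  I1 <> I2 -> (l1 t, l2 t) <> (0, 0) -> phi t = 0 -> exceptional_time t.
Proof.
  intros HI Hnz Hphi. unfold exceptional_time.
  destruct (zero_isolated_or_critical _ _ _ Hphi deriv_phi) as [Hiso | Hpsi2]; [now left|].
  assert (Hpsi : psi t = 0) by lra.
  destruct (zero_isolated_or_critical _ _ _ Hpsi deriv_psi) as [Hiso | Hchi']; [now right; left|].
  assert (Hchi : chi t = 0) by (rewrite Hphi in Hchi'; lra).
  destruct (zero_isolated_or_critical _ _ _ Hchi deriv_chi) as [Hiso | Hmix];
    [now right; right; left|].
  assert (Hp1 : p1 t = 0).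
  { rewrite Hpsi, Rmult_0_r in Hmix. unfold psi in Hpsi.
    replace (p2 t) with (- p1 t) in Hmix by lra.
    assert (Hprod : (I1 - I2) * p1 t = 0) by lra.
    apply Rmult_integral in Hprod as [H | H]; [exfalso; apply HI; lra | exact H]. }
  assert (Hp2 : p2 t = 0) by (unfold psi in Hpsi; lra).
  destruct (zero_isolated_or_critical _ _ _ Hp1 deriv_p1) as [Hiso | Hd1];
    [now right; right; right; left|].
  destruct (zero_isolated_or_critical _ _ _ Hp2 deriv_p2) as [Hiso | Hd2];
    [now right; right; right; right|].
  exfalso. exact (no_degenerate_zero _ _ _ _ _ _ _ HI Hnz Hphi Hp1 Hp2 Hd1 Hd2).
Qed.

End AtRegularTime.

End Extremal.

(** * Minimizing the Hamiltonian *)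

Lemma Ham_difference (I1 I2 lam0 l1 l2 th1 th2 v w : R) :
  Ham I1 I2 lam0 l1 l2 th1 th2 v - Ham I1 I2 lam0 l1 l2 th1 th2 w =
  switching l1 l2 th1 th2 * (v - w).
Proof. unfold Ham, switching. ring. Qed.

Lemma affine_minimizer (s w M : R) :
  s <> 0 -> Rabs w <= M -> (forall v, Rabs v <= M -> s * w <= s * v) ->
  (s < 0 -> w = M) /\ (s > 0 -> w = - M) /\ (w = M \/ w = - M).
Proof.
  intros Hs Hw Hmin. pose proof (Rle_abs w). pose proof (Rle_abs (- w)) as Hw'.
  rewrite Rabs_Ropp in Hw'.
  assert (HM : Rabs M <= M) by (rewrite Rabs_pos_eq; lra).
  assert (HmM : Rabs (- M) <= M) by (rewrite Rabs_Ropp, Rabs_pos_eq; lra).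
  pose proof (Hmin M HM). pose proof (Hmin (- M) HmM).
  assert (Hneg : s < 0 -> w = M) by (intros; nra).
  assert (Hpos : s > 0 -> w = - M) by (intros; nra).
  repeat split; auto.
  destruct (Rlt_or_le s 0); [left; auto | right; apply Hpos; lra].
Qed.

Lemma Ham_minimizer_bang_bang (I1 I2 lam0 l1 l2 th1 th2 w M : R) :
  switching l1 l2 th1 th2 <> 0 -> Rabs w <= M ->
  (forall v, Rabs v <= M ->
     Ham I1 I2 lam0 l1 l2 th1 th2 w <= Ham I1 I2 lam0 l1 l2 th1 th2 v) ->
  (switching l1 l2 th1 th2 < 0 -> w = M) /\ (switching l1 l2 th1 th2 > 0 -> w = - M) /\
  (w = M \/ w = - M).
Proof.
  intros Hs Hw Hmin. apply affine_minimizer; [exact Hs | exact Hw|].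
  intros v Hv. pose proof (Hmin v Hv).
  pose proof (Ham_difference I1 I2 lam0 l1 l2 th1 th2 v w). nra.
Qed.

Theorem mainTheorem4
  (I1 I2 M : R) (m1 m2 : nat) (T : R)
  (th1 th2 l1 l2 u : R -> R) (lam0 : R)
  (hI1 : 0 < I1) (hI2 : 0 < I2) (hI12 : I1 <> I2) (hM : 0 < M)
  (hm1 : (0 < m1)%nat) (hm2 : (0 < m2)%nat) (hT : 0 < T)
  (* admissible control *)
  (hu : forall t, 0 <= t <= T -> Rabs (u t) <= M)
  (* trajectory: absolutely continuous Caratheodory solution *)
  (hac1 : abs_cont_on T th1) (hac2 : abs_cont_on T th2)
  (hode : ae_on T (fun t =>
      derivable_pt_lim th1 t (f_i I1 (th1 t) + Z_i (th1 t) * u t) /\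
      derivable_pt_lim th2 t (f_i I2 (th2 t) + Z_i (th2 t) * u t)))
  (h0 : th1 0 = 0 /\ th2 0 = 0)
  (hTend : th1 T = 2 * INR m1 * PI /\ th2 T = 2 * INR m2 * PI)
  (* Pontryagin extremal: multipliers *)
  (hlam0 : 0 <= lam0)
  (hlnz : forall t, 0 <= t <= T -> (l1 t, l2 t) <> (0, 0))
  (hacl1 : abs_cont_on T l1) (hacl2 : abs_cont_on T l2)
  (hadj : ae_on T (fun t =>
      derivable_pt_lim l1 t (- dHam_dth I1 (l1 t) (th1 t) (u t)) /\
      derivable_pt_lim l2 t (- dHam_dth I2 (l2 t) (th2 t) (u t))))
  (hmin : ae_on T (fun t => forall v, Rabs v <= M ->
      Ham I1 I2 lam0 (l1 t) (l2 t) (th1 t) (th2 t) (u t)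
      <= Ham I1 I2 lam0 (l1 t) (l2 t) (th1 t) (th2 t) v))
  (hH0 : ae_on T (fun t =>
      Ham I1 I2 lam0 (l1 t) (l2 t) (th1 t) (th2 t) (u t) = 0)) :
  (forall a b, 0 <= a -> a < b -> b <= T ->
     exists t, a < t < b /\ switching (l1 t) (l2 t) (th1 t) (th2 t) <> 0)
  /\
  ae_on T (fun t =>
     (switching (l1 t) (l2 t) (th1 t) (th2 t) < 0 -> u t = M) /\
     (switching (l1 t) (l2 t) (th1 t) (th2 t) > 0 -> u t = - M) /\
     (u t = M \/ u t = - M)).
Proof.
  destruct hode as [N1 [HN1 Hode]], hadj as [N2 [HN2 Hadj]], hmin as [N3 [HN3 Hmin]].
  set (Null t := N1 t \/ N2 t \/ N3 t \/ exceptional_time I1 I2 th1 th2 l1 l2 t).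
  assert (HNull : negligible Null).
  { do 3 (apply negligible_union; [assumption|]).
    apply countable_negligible, exceptional_time_countable. }
  assert (Hphi : forall t, 0 <= t <= T -> ~ Null t -> phi th1 th2 l1 l2 t <> 0).
  { intros t Ht Hnull H0. apply Hnull. do 3 right.
    destruct (Hode t Ht) as [D1 D2]; [intro; apply Hnull; now left|].
    destruct (Hadj t Ht) as [D3 D4]; [intro; apply Hnull; now right; left|].
    apply (switching_zero_exceptional I1 I2 th1 th2 l1 l2 u); auto. now repeat split. }
  split.
  - intros a b Ha Hab Hb. apply NNPP. intros Hnone.
    apply (interval_not_negligible Null a b Hab HNull). intros t Ht.
    apply NNPP. intros Hnull. apply Hnone. exists t. split; [exact Ht|].
    apply Hphi; [lra | exact Hnull].
  - exists Null. split; [exact HNull|]. intros t Ht Hnull.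
    apply (Ham_minimizer_bang_bang I1 I2 lam0); [exact (Hphi t Ht Hnull) | now apply hu|].
    apply Hmin; [exact Ht|]. intro H3. apply Hnull. now right; right; left.
Qed.
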